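(* Let $X$ be a distance-regular graph of diameter $4$ on $n$ vertices that is both bipartite and antipodal. Then $\mathrm{motion}(X)\geq 0.15\,n$.
   Context: A distance-regular graph of diameter $d$ is a connected graph such that for vertices $v,w$ at distance $i$ the numbers of neighbours of $w$ at distance $i-1,i,i+1$ from $v$ are constants depending only on $i$. It is antipodal if being at distance $d$ or equal is an equivalence relation on vertices. The motion of a graph is the minimum, over non-identity automorphisms, of the number of vertices not fixed. *)

From mathcomp Require Import all_boot all_fingroup.
Set Implicit Arguments. Unset Strict Implicit. Unset Printing Implicit Defensive.

Section Graphs.
Variable T : finType.
Variable e : rel T.

Definition simple_graph : Prop := irreflexive e /\ symmetric e.

Fixpoint ball (k : nat) (x : T) : {set T} :=
  match k with
  | 0 => [set x]
  | k'.+1 => ball k' x :|: [set y | [exists z in ball k' x, e z y]]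
  end.

Definition is_dist (x y : T) (k : nat) : bool :=
  (y \in ball k x) && (if k is k'.+1 then y \notin ball k' x else true).

Definition sphere (k : nat) (x : T) : {set T} := [set y | is_dist x y k].

Definition neighbours (x : T) : {set T} := [set y | e x y].

Definition connected_graph : Prop := forall x y : T, exists k, is_dist x y k.

Definition has_diameter (d : nat) : Prop :=
  connected_graph /\ (forall x y k, is_dist x y k -> k <= d) /\
  exists x y, is_dist x y d.

Definition distance_regular (d : nat) : Prop :=
  simple_graph /\ has_diameter d /\
  exists c a b : nat -> nat, forall (v w : T) (i : nat), is_dist v w i ->
     [/\ #|neighbours w :&: (if i is i'.+1 then sphere i' v else set0)| = c i,
         #|neighbours w :&: sphere i v| = a i &
         #|neighbours w :&: sphere i.+1 v| = b i].

Definition bipartite : Prop :=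
  exists col : T -> bool, forall x y, e x y -> col x != col y.

Definition antipodal (d : nat) : Prop :=
  let R x y := (x == y) || is_dist x y d in
  (forall x, R x x) /\ (forall x y, R x y -> R y x) /\
  (forall x y z, R x y -> R y z -> R x z).

Definition is_automorphism (s : {perm T}) : Prop :=
  forall x y, e (s x) (s y) = e x y.

Definition moved (s : {perm T}) : nat := #|[set x | s x != x]|.

End Graphs.

From mathcomp Require Import all_boot all_fingroup.
From mathcomp Require Import zify.
Set Implicit Arguments. Unset Strict Implicit. Unset Printing Implicit Defensive.

(* If s fixes no vertex it moves all of them; otherwise it preserves the
   bipartition.  Antipodes (vertices at distance 4) have no common neighbour, so
   each vertex has exactly one neighbour in every fibre of the other colour, and
   2 c_2 <= b_0.  A moved vertex x has at most c_2 fixed neighbours: none if x is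
   antipodal to s x, and otherwise they are common neighbours of x and s x.
   Double counting the edges between fixed and moved vertices then bounds the
   fixed vertices having at most b_0 / 2 fixed neighbours by the moved ones.
   The remaining fixed vertices of a given colour all lie in one fibre, which is
   no larger than a fibre consisting of moved vertices of that colour.  Hence
   #|Fix| <= 2 #|Moved|, i.e. the motion is at least n / 3. *)

Section Distance.
Variables (T : finType) (e : rel T).

Lemma ball0 x y : (y \in ball e 0 x) = (y == x).
Proof. by rewrite inE. Qed.

Lemma ballS k x y :
  (y \in ball e k.+1 x) = (y \in ball e k x) || [exists z in ball e k x, e z y].
Proof. by rewrite /= !inE. Qed.

Lemma subset_ball i j x : i <= j -> ball e i x \subset ball e j x.
Proof.
elim: j => [|j IHj]; first by rewrite leqn0 => /eqP ->.
rewrite leq_eqVlt => /orP[/eqP -> //|/IHj sij].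
by apply: (subset_trans sij); apply/subsetP => y yb; rewrite ballS yb.
Qed.

Lemma ball_step k x z y : z \in ball e k x -> e z y -> y \in ball e k.+1 x.
Proof.
by move=> zb ezy; rewrite ballS; apply/orP; right; apply/existsP; exists z; rewrite zb.
Qed.

Lemma ball_start k y z x : e y z -> x \in ball e k z -> x \in ball e k.+1 y.
Proof.
move=> eyz; elim: k x => [|k IHk] x.
  by rewrite ball0 => /eqP ->; apply: (ball_step (z := y)); rewrite ?ball0.
rewrite ballS => /orP[/IHk xb|/existsP[u /andP[ub eux]]].
  exact: (subsetP (subset_ball _ (leqnSn _))).
by apply: (ball_step (z := u)) => //; apply: IHk.
Qed.

Lemma is_dist0 x y : is_dist e x y 0 = (y == x).
Proof. by rewrite /is_dist ball0 andbT. Qed.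

Lemma is_distS k x y : is_dist e x y k.+1 -> exists2 z, is_dist e x z k & e z y.
Proof.
rewrite /is_dist ballS => /andP[/orP[->//|/existsP[z /andP[zb ezy]]] yNb].
exists z => //; rewrite zb /=; case: k zb yNb => // k zb yNb.
by apply: contra yNb => zb'; apply: ball_step zb' ezy.
Qed.

Lemma is_dist_leq i j x y : is_dist e x y i -> y \in ball e j x -> i <= j.
Proof.
case: i => // i /andP[_ yNb] yb; rewrite ltnNge; apply: contra yNb => ji.
exact: (subsetP (subset_ball _ ji)).
Qed.

Lemma is_dist_uniq i j x y : is_dist e x y i -> is_dist e x y j -> i = j.
Proof.
move=> di dj; apply/eqP; rewrite eqn_leq.
by rewrite (is_dist_leq di (proj1 (andP dj))) (is_dist_leq dj (proj1 (andP di))).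
Qed.

Lemma ball2_is_dist4 x y w : is_dist e x y 4 -> e x w -> e w y -> False.
Proof.
move=> /andP[_ /negP yNb] exw ewy; apply: yNb.
apply: (subsetP (subset_ball _ (_ : 2 <= 3))) => //.
by apply: (ball_step (z := w)) => //; apply: (ball_step (z := x)); rewrite ?ball0.
Qed.

Lemma bipartite_parity (col : T -> bool) k x y :
  (forall x y, e x y -> col x != col y) -> is_dist e x y k -> col y = col x (+) odd k.
Proof.
move=> col_e; elim: k y => [|k IHk] y; first by rewrite is_dist0 => /eqP ->; rewrite addbF.
case/is_distS=> z /IHk colz /col_e; rewrite colz /= addbN.
by case: (col y); case: (col x (+) odd k).
Qed.

Definition antipodal_rel d x y := (x == y) || is_dist e x y d.

Definition antipodal_class d x := [set y | antipodal_rel d x y].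

Lemma antipodal_rel_refl d x : antipodal_rel d x x.
Proof. by rewrite /antipodal_rel eqxx. Qed.

Lemma antipodal_relP d x y : antipodal_rel d x y -> x != y -> is_dist e x y d.
Proof. by case/orP => [/eqP -> |//]; rewrite eqxx. Qed.

Section Invariance.
Variable s : {perm T}.
Hypothesis s_aut : is_automorphism e s.

Lemma ball_perm k x y : (s y \in ball e k (s x)) = (y \in ball e k x).
Proof.
elim: k x y => [|k IHk] x y; first by rewrite !ball0 (inj_eq perm_inj).
rewrite !ballS IHk; congr orb; apply/existsP/existsP => -[z /andP[zb ezy]].
  by exists (s^-1 z)%g; rewrite -IHk permKV zb /= -s_aut permKV.
by exists (s z); rewrite IHk zb s_aut.
Qed.

Lemma is_dist_perm k x y : is_dist e (s x) (s y) k = is_dist e x y k.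
Proof. by case: k => [|k]; rewrite /is_dist !ball_perm. Qed.

Lemma antipodal_rel_perm d x y : antipodal_rel d (s x) (s y) = antipodal_rel d x y.
Proof. by rewrite /antipodal_rel (inj_eq perm_inj) is_dist_perm. Qed.

End Invariance.

Hypothesis e_sym : symmetric e.

Lemma ball_sym k x y : (y \in ball e k x) = (x \in ball e k y).
Proof.
suff ball_symW x' y' : y' \in ball e k x' -> x' \in ball e k y'.
  by apply/idP/idP; apply: ball_symW.
elim: k x' y' => [|k IHk] x' y'; first by rewrite !ball0 eq_sym.
rewrite ballS => /orP[/IHk yb|/existsP[z /andP[zb ezy]]].
  exact: (subsetP (subset_ball _ (leqnSn _))).
by apply: (ball_start (z := z)); [rewrite e_sym|apply: IHk].
Qed.

Lemma is_dist_sym k x y : is_dist e x y k = is_dist e y x k.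
Proof. by case: k => [|k]; rewrite /is_dist (ball_sym _ x y) ?(ball_sym k x y). Qed.

Hypothesis e_irr : irreflexive e.

Lemma is_dist1 x y : is_dist e x y 1 = e x y.
Proof.
rewrite /is_dist ballS !ball0; apply/idP/idP.
  by case/andP=> /orP[->//|/existsP[z /andP[]]]; rewrite ball0 => /eqP ->.
move=> exy; have yNx : y != x by apply: contraTneq exy => ->; rewrite e_irr.
by rewrite yNx andbT; apply/orP; right; apply/existsP; exists x; rewrite ball0 eqxx.
Qed.

End Distance.

Section Counting.
Variable T : finType.

Lemma inj_leq_card (A B : {set T}) (f : T -> T) :
  {in A &, injective f} -> {in A, forall x, f x \in B} -> #|A| <= #|B|.
Proof.
move=> f_inj fAB; rewrite -(card_in_imset f_inj); apply: subset_leq_card.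
by apply/subsetP => y /imsetP[x xA ->]; apply: fAB.
Qed.

Lemma card_fibres (U : finType) (A : {set T}) (B : {set U}) (f : T -> U) :
  {in A, forall a, f a \in B} -> #|A| = \sum_(b in B) #|[set a in A | f a == b]|.
Proof.
move=> fAB; rewrite -sum1_card (partition_big f (mem B)) //=.
by apply: eq_bigr => b _; rewrite -sum1dep_card.
Qed.

Lemma card_fibres_leq (U : finType) (A : {set T}) (B : {set U}) (f : T -> U) m :
  {in A, forall a, f a \in B} ->
  (forall b, b \in B -> #|[set a in A | f a == b]| <= m) -> #|A| <= m * #|B|.
Proof.
move=> fAB fibre_m; rewrite (card_fibres fAB) mulnC -sum_nat_const.
exact: leq_sum.
Qed.

Variable e : rel T.

Lemma card_neighbours_setI a (B : {set T}) :
  #|neighbours e a :&: B| = \sum_(b in B) e a b.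
Proof.
rewrite -sum1_card (eq_bigl (fun b => (b \in B) && e a b)); last first.
  by move=> b; rewrite !inE andbC.
by rewrite big_mkcondr /=; apply: eq_bigr => b _; case: (e a b).
Qed.

Lemma double_count_edges (A B : {set T}) : symmetric e ->
  \sum_(a in A) #|neighbours e a :&: B| = \sum_(b in B) #|neighbours e b :&: A|.
Proof.
move=> e_sym; under eq_bigr do rewrite card_neighbours_setI.
rewrite exchange_big /=; apply: eq_bigr => b _; rewrite card_neighbours_setI.
by apply: eq_bigr => a _; rewrite e_sym.
Qed.

End Counting.

Definition fixpoints (T : finType) (s : {perm T}) := [set x | s x == x].

Lemma moved_fixpointsC (T : finType) (s : {perm T}) : moved s = #|~: fixpoints s|.
Proof. by apply: eq_card => x; rewrite !inE. Qed.

Section AntipodalBipartite.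
Variables (T : finType) (e : rel T) (col : T -> bool) (c b : nat -> nat).
Hypotheses (e_irr : irreflexive e) (e_sym : symmetric e).
Hypothesis e_conn : connected_graph e.
Hypothesis diameter_le4 : forall x y k, is_dist e x y k -> k <= 4.
Hypothesis diameter_ge4 : exists x y, is_dist e x y 4.
Hypothesis card_c : forall v w i, is_dist e v w i ->
  #|neighbours e w :&: (if i is i'.+1 then sphere e i' v else set0)| = c i.
Hypothesis card_b : forall v w i, is_dist e v w i ->
  #|neighbours e w :&: sphere e i.+1 v| = b i.
Hypothesis col_edge : forall x y, e x y -> col x != col y.

Local Notation antip := (antipodal_rel e 4).
Local Notation fibre := (antipodal_class e 4).

Hypothesis antip_sym : forall x y, antip x y -> antip y x.
Hypothesis antip_trans : forall x y z, antip x y -> antip y z -> antip x z.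

Lemma sphere1 x : sphere e 1 x = neighbours e x.
Proof. by apply/setP => y; rewrite !inE is_dist1. Qed.

Lemma card_neighbours x : #|neighbours e x| = b 0.
Proof.
have dxx : is_dist e x x 0 by rewrite is_dist0.
by have := card_b dxx; rewrite sphere1 setIid.
Qed.

Lemma card_common_neighbours x y :
  is_dist e x y 2 -> #|neighbours e x :&: neighbours e y| = c 2.
Proof. by move/card_c; rewrite sphere1 setIC. Qed.

Lemma antip_col x y : antip x y -> col x = col y.
Proof.
case/orP=> [/eqP -> //|/(bipartite_parity col_edge) ->].
by rewrite addbF.
Qed.

Lemma same_col_is_dist2 x y :
  col x = col y -> x != y -> ~~ antip x y -> is_dist e x y 2.
Proof.
move=> cxy xNy xNantip; have [i dxy] := e_conn x y.
have /esym := bipartite_parity col_edge dxy.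
rewrite cxy -[in RHS](addbF (col y)) => /addbI odd_i.
have := diameter_le4 dxy; case: i dxy odd_i => [|[|[|[|[|i]]]]] //= dxy _ _.
  by rewrite is_dist0 eq_sym (negbTE xNy) in dxy.
by rewrite /antipodal_rel dxy orbT in xNantip.
Qed.

Lemma antip_neighbours_eq p y y' : e p y -> e p y' -> antip y y' -> y = y'.
Proof.
move=> epy epy' /orP[/eqP //|dyy']; exfalso.
by apply: (ball2_is_dist4 dyy' _ epy'); rewrite e_sym.
Qed.

Lemma b3_gt0 : 0 < b 3.
Proof.
have [x [y dxy]] := diameter_ge4; have [w dxw ewy] := is_distS dxy.
by rewrite -(card_b dxw) card_gt0; apply/set0Pn; exists y; rewrite !inE ewy.
Qed.

Lemma exists_neighbour_in_fibre p q : col p != col q -> exists2 y, e p y & antip q y.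
Proof.
move=> cpq; have [i dqp] := e_conn q p.
have odd_i : odd i.
  by move: cpq; rewrite (bipartite_parity col_edge dqp); case: (col q); case: (odd i).
have := diameter_le4 dqp; case: i dqp odd_i => [|[|[|[|[|i]]]]] //= dqp _ _.
  by exists q; rewrite ?antipodal_rel_refl // e_sym -(is_dist1 e_irr).
have := b3_gt0; rewrite -(card_b dqp) card_gt0 => /set0Pn[y].
by rewrite !inE => /andP[epy dqy]; exists y; rewrite // /antipodal_rel dqy orbT.
Qed.

Definition fibre_nbr q p := odflt p [pick y in neighbours e p :&: fibre q].

Lemma fibre_nbrP p q : col p != col q -> e p (fibre_nbr q p) /\ antip q (fibre_nbr q p).
Proof.
move=> cpq; rewrite /fibre_nbr; case: pickP => [y|] /=; first by rewrite !inE => /andP[-> ->].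
by have [y epy aqy] := exists_neighbour_in_fibre cpq; move/(_ y); rewrite !inE epy aqy.
Qed.

Lemma b0_gt1 : 1 < b 0.
Proof.
have [x [y dxy]] := diameter_ge4; have [w dxw ewy] := is_distS dxy.
have [z dxz ezw] := is_distS dxw.
rewrite -(card_neighbours w) (cardsD1 y) !inE ewy add1n ltnS card_gt0.
apply/set0Pn; exists z; rewrite !inE e_sym ezw andbT.
by apply: contraTneq dxz => ->; apply/negP => /(is_dist_uniq dxy).
Qed.

(* For x at distance 4 from y and z at distance 2 from both, the neighbours of
   z adjacent to x and those adjacent to y form two disjoint sets of size c 2. *)
Lemma c2_double_leq_b0 : 2 * c 2 <= b 0.
Proof.
have [y [x dyx]] := diameter_ge4; have dxy : is_dist e x y 4 by rewrite is_dist_sym.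
have [w dxw ewy] := is_distS dxy; have [z dxz ezw] := is_distS dxw.
have zb : z \in ball e 2 y.
  by apply: (ball_step (z := w)); [apply: (ball_step (z := y)); rewrite ?ball0|];
     rewrite // e_sym.
have yNz : y != z by apply: contraTneq dxz => <-; apply/negP => /(is_dist_uniq dxy).
have dyz : is_dist e y z 2.
  apply: (same_col_is_dist2 _ yNz).
    by rewrite (bipartite_parity col_edge dxy) (bipartite_parity col_edge dxz).
  by rewrite /antipodal_rel negb_or yNz; apply/negP => /is_dist_leq/(_ zb).
rewrite -(card_neighbours z) mul2n -addnn -{1}(card_common_neighbours dyz).
rewrite -(card_common_neighbours dxz) -cardsUI.
have -> : (neighbours e y :&: neighbours e z) :&: (neighbours e x :&: neighbours e z) = set0.
  apply/setP => t; rewrite !inE; apply/negP => /andP[/andP[eyt _] /andP[ext _]].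
  by apply: (ball2_is_dist4 dxy ext); rewrite e_sym.
rewrite cards0 addn0; apply: subset_leq_card; apply/subsetP => t.
by rewrite !inE (e_sym z) => /orP[] /andP[_ ->].
Qed.

Lemma card_fibre_leq p q : col p != col q -> #|fibre p| <= #|fibre q|.
Proof.
have col_fibre p1 : p1 \in fibre p -> col p != col q -> col p1 != col q.
  by rewrite inE => /antip_col <-.
move=> cpq; apply: (@inj_leq_card _ _ _ (fibre_nbr q)) => [p1 p2 p1p p2p eqf|p1 p1p].
  have [e1 _] := fibre_nbrP (col_fibre _ p1p cpq).
  have [e2 _] := fibre_nbrP (col_fibre _ p2p cpq).
  move: p1p p2p; rewrite !inE => ap1 ap2.
  apply: (antip_neighbours_eq (p := fibre_nbr q p1)).
  - by rewrite e_sym.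
  - by rewrite eqf e_sym.
  - exact: antip_trans (antip_sym ap1) ap2.
by rewrite inE; case: (fibre_nbrP (col_fibre _ p1p cpq)).
Qed.

Lemma fibre_is_dist2 u q p : col u = col q -> ~~ antip u q -> antip q p -> is_dist e u p 2.
Proof.
move=> cuq uNq aqp; apply: same_col_is_dist2.
- by rewrite cuq (antip_col aqp).
- by apply: contraNneq uNq => ->; apply: antip_sym.
- by apply: contraNN uNq => aup; apply: antip_trans aup (antip_sym aqp).
Qed.

(* Each neighbour of u has exactly one neighbour in the fibre of q, and each
   vertex of that fibre has c 2 common neighbours with u. *)
Lemma c2_card_fibre_leq_b0 u q : col u = col q -> ~~ antip u q -> c 2 * #|fibre q| <= b 0.
Proof.
move=> cuq uNq; have col_nbr w : e u w -> col w != col q.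
  by rewrite -cuq eq_sym; apply: col_edge.
rewrite -(card_neighbours u).
rewrite (@card_fibres _ _ (neighbours e u) (fibre q) (fibre_nbr q)); last first.
  by move=> w; rewrite !inE => euw; case: (fibre_nbrP (col_nbr w euw)).
rewrite mulnC -sum_nat_const; apply: leq_sum => p; rewrite inE => aqp.
rewrite -(card_common_neighbours (fibre_is_dist2 cuq uNq aqp)).
apply: subset_leq_card; apply/subsetP => w; rewrite !inE => /andP[euw epw].
rewrite euw; have [ewf aqf] := fibre_nbrP (col_nbr _ euw); apply/eqP/esym.
apply: (antip_neighbours_eq (p := w)) ewf _; first by rewrite e_sym.
exact: antip_trans (antip_sym aqp) aqf.
Qed.

Lemma card_fibre_nbr_preim_leq u q p (A : {set T}) :
  A \subset neighbours e u -> col u = col q -> ~~ antip u q -> antip q p ->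
  #|[set a in A | fibre_nbr q a == p]| <= c 2.
Proof.
move=> sAu cuq uNq aqp.
rewrite -(card_common_neighbours (fibre_is_dist2 cuq uNq aqp)).
apply: subset_leq_card; apply/subsetP => a; rewrite !inE => /andP[aA /eqP fa].
have eua : e u a by rewrite -[e u a]inE (subsetP sAu).
have caq : col a != col q by rewrite -cuq eq_sym col_edge.
by have [eaf _] := fibre_nbrP caq; rewrite eua e_sym -fa.
Qed.

Section Automorphism.
Variable s : {perm T}.
Hypothesis s_aut : is_automorphism e s.

Local Notation Fix := (fixpoints s).

Lemma col_perm_of_fixed z : s z = z -> forall x, col (s x) = col x.
Proof.
move=> sz x; have [i dzx] := e_conn z x.
have dzsx : is_dist e z (s x) i by rewrite -sz is_dist_perm.
by rewrite (bipartite_parity col_edge dzx) (bipartite_parity col_edge dzsx).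
Qed.

Lemma antip_perm_fibre x y : antip x y -> antip x (s x) -> antip y (s y).
Proof.
move=> axy axsx; apply: antip_trans (antip_trans (antip_sym axy) axsx) _.
by rewrite antipodal_rel_perm.
Qed.

(* A neighbour w of x fixed by s would be a common neighbour of x and s x. *)
Lemma moved_antip_nbr_moved x w : s x != x -> antip x (s x) -> e x w -> s w != w.
Proof.
move=> sxNx axsx exw; apply/eqP => sw.
have dx : is_dist e x (s x) 4 by apply: antipodal_relP axsx _; rewrite eq_sym.
by apply: (ball2_is_dist4 dx exw); rewrite -[in e w _]sw s_aut e_sym.
Qed.

Lemma fixed_nbr_fixed z w : s z = z -> e z w -> antip w (s w) -> s w = w.
Proof.
move=> sz ezw awsw; apply/esym/(antip_neighbours_eq (p := z)) => //.
by rewrite -[in e z _]sz s_aut.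
Qed.

Definition stable_nbrs x := [set y in neighbours e x | antip y (s y)].

Lemma card_fixed_nbrs_leq_stable z x :
  s z = z -> col x = col z -> #|neighbours e z :&: Fix| <= #|stable_nbrs x|.
Proof.
move=> sz cxz; have col_nbr w : e z w -> col x != col w.
  by rewrite cxz; apply: col_edge.
apply: (@inj_leq_card _ _ _ (fibre_nbr^~ x)).
  move=> w1 w2; rewrite !inE => /andP[ez1 _] /andP[ez2 _] eqf.
  have [_ a1] := fibre_nbrP (col_nbr _ ez1); have [_ a2] := fibre_nbrP (col_nbr _ ez2).
  apply: (antip_neighbours_eq ez1 ez2); apply: antip_trans a1 _.
  by rewrite eqf; apply: antip_sym.
move=> w; rewrite !inE => /andP[ezw /eqP sw]; have [exf awf] := fibre_nbrP (col_nbr _ ezw).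
by rewrite exf; apply: antip_perm_fibre awf _; rewrite sw antipodal_rel_refl.
Qed.

Hypothesis s_col : forall x, col (s x) = col x.

Lemma card_fixed_nbrs_moved x : s x != x -> #|neighbours e x :&: Fix| <= c 2.
Proof.
move=> sxNx; case axsx: (antip x (s x)).
  suff -> : neighbours e x :&: Fix = set0 by rewrite cards0.
  apply/setP => w; rewrite !inE.
  by apply/negbTE; apply/andP => -[/(moved_antip_nbr_moved sxNx axsx)/negbTE ->].
have dx : is_dist e x (s x) 2 by apply: same_col_is_dist2; rewrite ?s_col 1?eq_sym ?axsx.
rewrite -(card_common_neighbours dx); apply: subset_leq_card; apply/subsetP => w.
by rewrite !inE => /andP[exw /eqP sw]; rewrite exw -[in e _ w]sw s_aut.
Qed.

Lemma card_fixed_nbrs_leq_fixed_fibre z q : s z = z -> s q = q -> col z = col q ->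
  ~~ antip z q -> #|neighbours e z :&: Fix| <= c 2 * #|fibre q :&: Fix|.
Proof.
move=> sz sq czq zNq; apply: (@card_fibres_leq _ _ _ _ (fibre_nbr q)).
  move=> w; rewrite !inE => /andP[ezw /eqP sw].
  have cwq : col w != col q by rewrite -czq eq_sym col_edge.
  have [ewf aqf] := fibre_nbrP cwq.
  rewrite aqf; apply/eqP; apply: fixed_nbr_fixed sw ewf _.
  by apply: antip_perm_fibre aqf _; rewrite sq antipodal_rel_refl.
move=> p; rewrite !inE => /andP[aqp _]; apply: card_fibre_nbr_preim_leq czq zNq aqp.
by apply/subsetP => w; rewrite !inE => /andP[].
Qed.

Lemma card_stable_nbrs_leq_moved_fibre x q : s x != x -> antip x (s x) -> col x = col q ->
  ~~ antip x q -> #|stable_nbrs x| <= c 2 * #|fibre q :\: Fix|.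
Proof.
move=> sxNx axsx cxq xNq; apply: (@card_fibres_leq _ _ _ _ (fibre_nbr q)).
  move=> y; rewrite !inE => /andP[exy ay].
  have cyq : col y != col q by rewrite -cxq eq_sym col_edge.
  have [eyf aqf] := fibre_nbrP cyq.
  rewrite aqf andbT; apply: moved_antip_nbr_moved eyf => //.
  exact: moved_antip_nbr_moved exy.
move=> p; rewrite !inE => /andP[_ aqp]; apply: card_fibre_nbr_preim_leq cxq xNq aqp.
by apply/subsetP => y; rewrite !inE => /andP[].
Qed.

(* The fixed neighbours of z are counted into the fixed part of the fibre of q
   directly, and into its moved part through the neighbours of x. *)
Lemma crowding_bound z x q : s z = z -> antip z x -> s x != x ->
  s q = q -> col q = col z -> ~~ antip z q -> 2 * #|neighbours e z :&: Fix| <= b 0.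
Proof.
move=> sz azx sxNx sq cqz zNq.
have axsx : antip x (s x) by apply: antip_perm_fibre azx _; rewrite sz antipodal_rel_refl.
have cxq : col x = col q by rewrite cqz (antip_col azx).
have xNq : ~~ antip x q by apply: contraNN zNq; apply: antip_trans azx.
apply: leq_trans (c2_card_fibre_leq_b0 (esym cqz) zNq).
rewrite -(cardsID Fix (fibre q)) mulnDr mul2n -addnn leq_add //.
  exact: card_fixed_nbrs_leq_fixed_fibre.
apply: leq_trans (card_fixed_nbrs_leq_stable sz (esym (antip_col azx))) _.
exact: card_stable_nbrs_leq_moved_fibre.
Qed.

Variable x0 : T.
Hypothesis x0_moved : s x0 != x0.

(* If every vertex of colour cc were fixed, x0 would have the other colour and
   all its b 0 neighbours would be fixed, against b 0 > c 2. *)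
Lemma exists_moved_col cc : exists2 x, s x != x & col x = cc.
Proof.
have [/existsP[x /andP[sxNx /eqP cx]]|/existsPn all_fixed] :=
  boolP [exists x, (s x != x) && (col x == cc)].
  by exists x.
have cx0 : col x0 != cc by move: (all_fixed x0); rewrite x0_moved.
suff : b 0 <= c 2 by have := c2_double_leq_b0; have := b0_gt1; lia.
rewrite -(card_neighbours x0); apply: leq_trans (card_fixed_nbrs_moved x0_moved).
apply: subset_leq_card; apply/subsetP => w; rewrite !inE => ex0w; rewrite ex0w /=.
have := all_fixed w; rewrite negb_and negbK => /orP[//|cw].
by move: cw (col_edge ex0w) cx0; case: (col w); case: (col x0); case: (cc).
Qed.

Definition crowded z := (s z == z) && (b 0 < 2 * #|neighbours e z :&: Fix|).
Definition uncrowded z := (s z == z) && (2 * #|neighbours e z :&: Fix| <= b 0).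

(* Otherwise the fibre of z is fixed, so every stable neighbour of a moved
   vertex of z's colour is fixed: it has a neighbour in that fibre. *)
Lemma crowded_fibre_moved z : crowded z -> exists2 x, antip z x & s x != x.
Proof.
case/andP => /eqP sz crowded_z.
have [/existsP[x /andP[azx sxNx]]|/existsPn fibre_fixed] :=
  boolP [exists x, antip z x && (s x != x)].
  by exists x.
have [x1 sx1Nx1 cx1] := exists_moved_col (col z).
suff : #|stable_nbrs x1| <= c 2.
  move/(leq_trans (card_fixed_nbrs_leq_stable sz cx1)).
  by move: crowded_z; have := c2_double_leq_b0; lia.
apply: leq_trans (card_fixed_nbrs_moved sx1Nx1); apply: subset_leq_card.
apply/subsetP => y; rewrite !inE => /andP[ex1y ay]; rewrite ex1y /=.
apply/negPn/negP => syNy.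
have czy : col y != col z by rewrite -cx1 eq_sym col_edge.
have [eyf azf] := fibre_nbrP czy.
have /negP := moved_antip_nbr_moved syNy ay eyf; apply.
by have := fibre_fixed (fibre_nbr z y); rewrite azf negbK.
Qed.

Lemma crowded_fixed_antip z z' : crowded z -> s z' = z' -> col z' = col z -> antip z z'.
Proof.
move=> crowded_z sz' cz'; have [x azx sxNx] := crowded_fibre_moved crowded_z.
apply/negPn/negP => zNz'; case/andP: crowded_z => /eqP sz.
by rewrite ltnNge (crowding_bound sz azx sxNx sz' cz' zNz').
Qed.

(* All crowded vertices of one colour lie in a single fibre, which is no larger
   than the fibre of a vertex x at distance 2 from them; the latter is moved. *)
Lemma card_crowded_col cc :
  #|[set z | crowded z] :&: [set z | col z == cc]| <= #|~: Fix :&: [set z | col z == cc]|.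
Proof.
have [->|[z]] := set_0Vmem ([set z | crowded z] :&: [set z | col z == cc]).
  by rewrite cards0.
rewrite !inE => /andP[crowded_z /eqP cz].
have : 0 < #|neighbours e z| by rewrite card_neighbours; have := b0_gt1; lia.
rewrite card_gt0 => /set0Pn[w]; rewrite inE => ezw.
have : 0 < #|neighbours e w :\ z|.
  have := cardsD1 z (neighbours e w); rewrite card_neighbours inE e_sym ezw.
  by have := b0_gt1; lia.
rewrite card_gt0 => /set0Pn[x]; rewrite !inE => /andP[xNz ewx].
have czw := col_edge ezw; have cwx := col_edge ewx.
have cxz : col x = col z by move: czw cwx; case: (col z); case: (col w); case: (col x).
have xb : x \in ball e 2 z.
  by apply: (ball_step (z := w)) => //; apply: (ball_step (z := z)); rewrite ?ball0.
have zNx : ~~ antip z x.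
  by rewrite /antipodal_rel negb_or eq_sym xNz; apply/negP => /is_dist_leq/(_ xb).
apply: (@leq_trans #|fibre z|).
  apply: subset_leq_card; apply/subsetP => y; rewrite !inE => /andP[/andP[/eqP sy _] /eqP cy].
  by apply: crowded_fixed_antip crowded_z sy _; rewrite cy.
apply: leq_trans (card_fibre_leq czw) _; apply: leq_trans (card_fibre_leq cwx) _.
apply: subset_leq_card; apply/subsetP => p; rewrite !inE => axp.
have cp : col p = col x := esym (antip_col axp).
rewrite cp cxz cz eqxx andbT; apply/eqP => sp.
case/negP: zNx; apply: antip_trans (crowded_fixed_antip crowded_z sp _) (antip_sym axp).
by rewrite cp.
Qed.

Lemma card_crowded : #|[set z | crowded z]| <= #|~: Fix|.
Proof.
have split_col (A : {set T}) :
    #|A| = #|A :&: [set z | col z == true]| + #|A :&: [set z | col z == false]|.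
  rewrite -(cardsID [set z | col z == true] A); congr (_ + _).
  by apply: eq_card => z; rewrite !inE andbC; case: (col z); rewrite ?andbT ?andbF.
by rewrite split_col [leqRHS]split_col leq_add ?card_crowded_col.
Qed.

(* An uncrowded vertex has at least b 0 / 2 moved neighbours, while a moved
   vertex has at most c 2 <= b 0 / 2 fixed neighbours. *)
Lemma card_uncrowded : #|[set z | uncrowded z]| <= #|~: Fix|.
Proof.
set U := [set z | _]; rewrite -(leq_pmul2l (ltnW b0_gt1)).
have sUF : U \subset Fix by apply/subsetP => z; rewrite !inE => /andP[].
apply: (@leq_trans (2 * \sum_(z in Fix) #|neighbours e z :&: ~: Fix|)).
  rewrite mulnC -sum_nat_const big_distrr /=.
  apply: (@leq_trans (\sum_(z in U) 2 * #|neighbours e z :&: ~: Fix|)).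
    apply: leq_sum => z; rewrite inE => /andP[_ uncrowded_z].
    by have := cardsID Fix (neighbours e z); rewrite card_neighbours setDE; lia.
  by rewrite [leqRHS](big_setID U) /= (setIidPr sUF) leq_addr.
rewrite double_count_edges //; apply: (@leq_trans (2 * (c 2 * #|~: Fix|))).
  rewrite leq_mul2l mulnC -sum_nat_const; apply/orP; right; apply: leq_sum => x.
  by rewrite inE => sxNx; apply: card_fixed_nbrs_moved; rewrite inE in sxNx.
by rewrite mulnA leq_mul2r c2_double_leq_b0 orbT.
Qed.

Lemma card_fixpoints_leq_moved_col : #|Fix| <= 2 * #|~: Fix|.
Proof.
have sFU : Fix \subset [set z | uncrowded z] :|: [set z | crowded z].
  by apply/subsetP => z; rewrite !inE /uncrowded /crowded => ->; case: leqP.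
apply: leq_trans (subset_leq_card sFU) _; apply: leq_trans (leq_card_setU _ _) _.
by rewrite mul2n -addnn leq_add ?card_uncrowded ?card_crowded.
Qed.

End Automorphism.

Lemma card_fixpoints_leq_moved (s : {perm T}) :
  is_automorphism e s -> s != 1%g -> #|fixpoints s| <= 2 * #|~: fixpoints s|.
Proof.
move=> s_aut s_nontriv.
have [x0 x0_moved] : exists x0, s x0 != x0.
  apply/existsP; apply: contraNT s_nontriv => /existsPn all_fixed.
  by apply/eqP/permP => x; rewrite perm1; apply/eqP; have := all_fixed x; rewrite negbK.
have [/existsP[z /eqP sz]|/existsPn no_fixed] := boolP [exists z, s z == z].
  exact: (card_fixpoints_leq_moved_col s_aut (col_perm_of_fixed s_aut sz) x0_moved).
suff -> : fixpoints s = set0 by rewrite cards0.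
by apply/setP => x; rewrite !inE; apply/negbTE/no_fixed.
Qed.

End AntipodalBipartite.

Unset Implicit Arguments. Set Strict Implicit.

Theorem proposition5p6 (T : finType) (e : rel T) :
  distance_regular e 4 -> bipartite e -> antipodal e 4 ->
  forall s : {perm T}, is_automorphism e s -> s != 1%g ->
    3 * #|T| <= 20 * moved s.
Proof.
move=> [[e_irr e_sym] [[e_conn [diam_le4 diam_ge4]] [c [a [b drg]]]]].
move=> [col col_edge] [_ [antip_sym antip_trans]] s s_aut s_nontriv.
have card_c v w i (d : is_dist e v w i) := let: And3 h _ _ := drg v w i d in h.
have card_b v w i (d : is_dist e v w i) := let: And3 _ _ h := drg v w i d in h.
have := card_fixpoints_leq_moved e_irr e_sym e_conn diam_le4 diam_ge4 card_c card_b
  col_edge antip_sym antip_trans s_aut s_nontriv.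
by have := cardsC (fixpoints s); rewrite moved_fixpointsC; lia.
Qed.
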